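(* Let $\mathcal P$ be a random collection of pairwise disjoint finite subsets of $\mathbb Z$. Let $k\ge2$, $\gamma\in\mathbb R$ and $p_0>0$ be such that for all integers $i_1<i_2<\dots<i_k$, $$\Pr\big(\{i_1,\dots,i_k\}\in\mathcal P\big)\ \ge\ p_0\prod_{j=1}^{k-1}(i_{j+1}-i_j)^{-\gamma}.$$ Then $\gamma>1$ and $p_0\le\dfrac{1}{k\,\zeta(\gamma)^{k-1}}$, where $\zeta$ is the Riemann zeta function. *)

From HB Require Import structures.
From mathcomp Require Import all_boot all_order all_algebra.
From mathcomp Require Import all_classical all_reals all_analysis.
Set Implicit Arguments. Unset Strict Implicit. Unset Printing Implicit Defensive.
Import Order.TTheory GRing.Theory Num.Theory numFieldNormedType.Exports.
Local Open Scope classical_set_scope.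
Local Open Scope ring_scope.

(* Riemann zeta function on the reals: zeta s = sum_{n >= 1} n^(-s)
   (meaningful for s > 1; for s <= 1 the value is the library's default of
   [lim] on a divergent sequence). *)
Definition zeta (R : realType) (s : R) : R :=
  limn (series (fun n : nat => (n.+1)%:R `^ (- s))).

Definition random_disjoint_collection d (Omega : measurableType d)
    (P : Omega -> set (set int)) : Prop :=
  [/\ (forall w A, P w A -> finite_set A),
      (forall w A B, P w A -> P w B -> A <> B -> A `&` B = set0) &
      (forall S : set int, finite_set S -> measurable [set w | P w S])].

From HB Require Import structures.
From mathcomp Require Import all_boot all_order all_algebra.
From mathcomp Require Import all_classical all_reals all_analysis.
From mathcomp Require Import zify ring.
Set Implicit Arguments. Unset Strict Implicit. Unset Printing Implicit Defensive.
Import Order.TTheory GRing.Theory Num.Theory numFieldNormedType.Exports.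
Local Open Scope classical_set_scope.
Local Open Scope ring_scope.

(* Fix N and count, for every gap vector g in [1, N]^(k-1) and every anchor
   m < k, the k-point configuration with consecutive gaps g whose m-th point
   is 0.  These k N^(k-1) configurations are distinct and all contain 0, so
   in a disjoint collection at most one of them occurs: their probabilities
   add up to at most 1, whence k p0 (sum_(n <= N) n^-gamma)^(k-1) <= 1.
   Bounded partial sums force gamma > 1, and letting N -> oo gives the
   bound on p0. *)

Lemma sorted_lt_map_iota disp (T : porderType disp) (f : nat -> T) a n :
  (forall i, (a <= i)%N -> (i.+1 < a + n)%N -> (f i < f i.+1)%O) ->
  sorted <%O (map f (iota a n)).
Proof.
elim: n a => [|n IH] a f_incr //=.
case: n IH f_incr => [|n] IH f_incr //=.
apply/andP; split; first by apply: f_incr => //; lia.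
by apply: (IH a.+1) => i ai hi; apply: f_incr; lia.
Qed.

Lemma sum_ffun_prod (R : comPzSemiRingType) n N (f : 'I_N -> R) :
  \sum_(g : {ffun 'I_n -> 'I_N}) \prod_(j < n) f (g j) = (\sum_(i < N) f i) ^+ n.
Proof.
by rewrite -(bigA_distr_bigA (fun (_ : 'I_n) i => f i)) prodr_const card_ord.
Qed.

Lemma sum_disjoint_probability_le1 (R : realType) d (Omega : measurableType d)
    (Pr : probability Omega R) (I : finType) (E : I -> set Omega) :
  (forall i, measurable (E i)) -> trivIset setT E -> (\sum_i Pr (E i) <= 1)%E.
Proof.
move=> mE tE; rewrite (eq_bigl (mem predT)) // (big_enum_val (A := predT)) /=.
rewrite -measure_bigsetU_ord //.
- by apply: probability_le1; apply: bigsetU_measurable.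
- move=> i j _ _ Eij; apply: enum_val_inj; exact: tE.
Qed.

Lemma disjoint_collection_eq d (Omega : measurableType d)
    (P : Omega -> set (set int)) w (A B : set int) x :
  random_disjoint_collection P -> P w A -> P w B -> A x -> B x -> A = B.
Proof.
move=> [_ Pdisj _] PA PB Ax Bx; apply: contrapT => AB.
have : (A `&` B) x by [].
by rewrite (Pdisj _ _ _ PA PB AB).
Qed.

Section AnchoredConfigurations.
Variables n N : nat.
Implicit Types (g : {ffun 'I_n -> 'I_N}) (m : 'I_n.+1).

(* The gaps are [g j + 1], so that they range over [1, N]. *)
Definition gap_pos g (i : nat) : nat := (\sum_(j < n | (j < i)%N) (g j).+1)%N.

Definition anchored_seq m g : seq int :=
  [seq (gap_pos g i)%:Z - (gap_pos g m)%:Z | i <- iota 0 n.+1].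

Lemma gap_posS g (j : 'I_n) : gap_pos g j.+1 = (gap_pos g j + (g j).+1)%N.
Proof.
rewrite /gap_pos (bigD1 j) //= addnC; congr (_ + _)%N.
by apply: eq_bigl => j'; rewrite ltnS -(inj_eq val_inj) /=; case: ltngtP.
Qed.

Lemma size_anchored_seq m g : size (anchored_seq m g) = n.+1.
Proof. by rewrite size_map size_iota. Qed.

Lemma nth_anchored_seq m g i : (i < n.+1)%N ->
  (anchored_seq m g)`_i = (gap_pos g i)%:Z - (gap_pos g m)%:Z.
Proof. by move=> ltin; rewrite (nth_map 0%N) ?size_iota // nth_iota. Qed.

Lemma anchored_seq_anchor m g : (anchored_seq m g)`_m = 0.
Proof. by rewrite nth_anchored_seq // subrr. Qed.

Lemma anchored_seq_gap m g (j : 'I_n) :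
  (anchored_seq m g)`_j.+1 - (anchored_seq m g)`_j = ((g j).+1)%:Z.
Proof.
have ltj1n : (j.+1 < n.+1)%N := ltn_ord j.
rewrite (nth_anchored_seq _ _ ltj1n) (nth_anchored_seq _ _ (ltnW ltj1n)).
by rewrite gap_posS PoszD; ring.
Qed.

Lemma sorted_anchored_seq m g : sorted <%R (anchored_seq m g).
Proof.
apply: sorted_lt_map_iota => i _; rewrite add0n ltnS => ltin.
by rewrite (gap_posS g (Ordinal ltin)) ltrD2r PoszD ltrDl.
Qed.

Lemma mem_anchored_seq0 m g : 0 \in anchored_seq m g.
Proof. by rewrite -(anchored_seq_anchor m g) mem_nth ?size_anchored_seq. Qed.

Lemma anchored_seq_inj m1 m2 g1 g2 :
  anchored_seq m1 g1 = anchored_seq m2 g2 -> m1 = m2 /\ g1 = g2.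
Proof.
move=> e; split.
  have anchor_index m g : index 0 (anchored_seq m g) = m.
    rewrite -{1}(anchored_seq_anchor m g) index_uniq ?size_anchored_seq //.
    exact/lt_sorted_uniq/sorted_anchored_seq.
  by apply: val_inj => /=; rewrite -(anchor_index m1 g1) e anchor_index.
apply/ffunP => j; apply: val_inj.
by have := anchored_seq_gap m1 g1 j; rewrite e anchored_seq_gap => -[].
Qed.

End AnchoredConfigurations.

Section ZetaPartialSums.
Variables (R : realType) (s : R).

Definition zeta_partial : R^nat := series (fun n => (n.+1)%:R `^ (- s)).

Lemma zeta_partialE N : zeta_partial N = \sum_(n < N) (n.+1)%:R `^ (- s).
Proof. by rewrite /zeta_partial /series /= big_mkord. Qed.

Lemma nondecreasing_zeta_partial : nondecreasing_seq zeta_partial.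
Proof. by apply: nondecreasing_series => n _ _; exact: powR_ge0. Qed.

Lemma zeta_partial_ge1 N : 1 <= zeta_partial N.+1.
Proof.
rewrite zeta_partialE big_ord_recl /= powR1 lerDl.
by apply: sumr_ge0 => i _; exact: powR_ge0.
Qed.

Lemma zeta_partial_le_inv c m N : (0 < m)%N -> 0 < c ->
  c * zeta_partial N ^+ m <= 1 -> zeta_partial N <= c^-1.
Proof.
move=> m_gt0 c_gt0 le1; rewrite -(ler_pM2l c_gt0) mulfV ?gt_eqF //.
case: N le1 => [|N] le1; first by rewrite zeta_partialE big_ord0 mulr0.
apply: le_trans le1; rewrite ler_pM2l //; apply: ler_eXnr => //.
exact: zeta_partial_ge1.
Qed.

Variables (M : R).
Hypothesis zeta_partial_bounded : forall N, zeta_partial N <= M.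

Lemma cvgn_zeta_partial : cvgn zeta_partial.
Proof.
apply: nondecreasing_is_cvgn; first exact: nondecreasing_zeta_partial.
by exists M => _ [N _ <-].
Qed.

(* Comparison with the divergent harmonic series. *)
Lemma zeta_partial_bounded_gt1 : 1 < s.
Proof.
rewrite ltNge; apply/negP => le_s1.
apply: (@dvg_riemannR R 1); first by rewrite ler01 lexx.
apply: (series_le_cvg _ _ _ cvgn_zeta_partial).
- by move=> n; apply/ltW/riemannR_gt0.
- by move=> n; exact: powR_ge0.
- by move=> n; rewrite /riemannR -powRN ler_powR ?ler1n ?lerN2.
Qed.

Lemma zeta_ge1 : 1 <= zeta s.
Proof.
apply: le_trans (zeta_partial_ge1 0) _.
exact: nondecreasing_cvgn_le nondecreasing_zeta_partial cvgn_zeta_partial _.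
Qed.

Lemma zeta_pow_le c m :
  (forall N, c * zeta_partial N ^+ m <= 1) -> c * zeta s ^+ m <= 1.
Proof.
move=> le1.
have cvg_pow : (fun N => c * zeta_partial N ^+ m) @ \oo --> c * zeta s ^+ m.
  apply: cvgM; first exact: cvg_cst.
  exact: (continuous_cvg _ (@exprn_continuous R m _)) cvgn_zeta_partial.
rewrite -(cvg_lim _ cvg_pow) //; apply: limr_le; first exact: cvgP cvg_pow.
by apply: nearW.
Qed.

End ZetaPartialSums.

Lemma zeta_partial_bound (R : realType) (d : measure_display)
    (Omega : measurableType d) (Pr : probability Omega R)
    (P : Omega -> set (set int)) (n : nat) (gamma p0 : R) :
  random_disjoint_collection P ->
  (forall s : seq int, size s = n.+1 -> sorted <%R s ->
     ((p0 * \prod_(j < n) ((s`_j.+1 - s`_j)%:~R `^ (- gamma)))%:E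
        <= Pr [set w | P w [set` s]])%E) ->
  forall N, n.+1%:R * p0 * zeta_partial gamma N ^+ n <= 1.
Proof.
move=> RP Pr_ge N.
pose weight (i : 'I_N) := i.+1%:R `^ (- gamma).
pose E (mg : 'I_n.+1 * {ffun 'I_n -> 'I_N}) :=
  [set w | P w [set` anchored_seq mg.1 mg.2]].
have Pr_E_ge (mg : 'I_n.+1 * {ffun 'I_n -> 'I_N}) :
    ((p0 * \prod_(j < n) weight (mg.2 j))%:E <= Pr (E mg))%E.
  have := Pr_ge _ (size_anchored_seq mg.1 mg.2) (sorted_anchored_seq _ _).
  by under eq_bigr do rewrite anchored_seq_gap -pmulrn.
have E_disjoint : trivIset setT E.
  move=> [m1 g1] [m2 g2] _ _ [w [P1 P2]].
  have same_set : [set` anchored_seq m1 g1] = [set` anchored_seq m2 g2].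
    exact: disjoint_collection_eq RP P1 P2
      (mem_anchored_seq0 _ _) (mem_anchored_seq0 _ _).
  have : anchored_seq m1 g1 = anchored_seq m2 g2.
    apply: lt_sorted_eq; rewrite ?sorted_anchored_seq // => x.
    by apply/idP/idP; rewrite -!/([set` _] x) same_set.
  by case/anchored_seq_inj => -> ->.
have E_measurable mg : measurable (E mg).
  by case: RP => _ _; apply; exact: finite_seq.
have sumE : \sum_(mg : 'I_n.+1 * {ffun 'I_n -> 'I_N})
    p0 * \prod_(j < n) weight (mg.2 j)
    = n.+1%:R * p0 * zeta_partial gamma N ^+ n.
  rewrite -(pair_bigA _ (fun _ (g : {ffun 'I_n -> 'I_N}) =>
    p0 * \prod_(j < n) weight (g j))) /=.
  rewrite sumr_const card_ord -mulr_sumr sum_ffun_prod.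
  by rewrite zeta_partialE mulr_natl mulrnAl.
rewrite -lee_fin -sumE -sumEFin.
apply: le_trans (sum_disjoint_probability_le1 Pr E_measurable E_disjoint).
by apply: lee_sum => mg _; exact: Pr_E_ge.
Qed.

Theorem mainTheorem6 (R : realType) (d : measure_display) (Omega : measurableType d)
    (Pr : probability Omega R) (P : Omega -> set (set int))
    (k : nat) (gamma p0 : R) :
  random_disjoint_collection P ->
  (2 <= k)%N -> 0 < p0 ->
  (forall s : seq int, size s = k -> sorted <%R s ->
     ((p0 * \prod_(j < k.-1) ((s`_j.+1 - s`_j)%:~R `^ (- gamma)))%:E
        <= Pr [set w | P w [set` s]])%E) ->
  1 < gamma /\ p0 <= 1 / (k%:R * zeta gamma ^+ k.-1).
Proof.
move=> RP k_ge2 p0_gt0 Pr_ge.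
have [n k_eq] : exists n, k = n.+1 by exists k.-1; lia.
subst k; have n_gt0 : (0 < n)%N := k_ge2.
have kp0_gt0 : 0 < n.+1%:R * p0 by rewrite mulr_gt0.
have bound := zeta_partial_bound RP Pr_ge.
have bounded N : zeta_partial gamma N <= (n.+1%:R * p0)^-1.
  exact: zeta_partial_le_inv n_gt0 kp0_gt0 (bound N).
split; first exact: zeta_partial_bounded_gt1 bounded.
have zeta_gt0 : 0 < zeta gamma := lt_le_trans ltr01 (zeta_ge1 bounded).
rewrite ler_pdivlMr ?mulr_gt0 ?exprn_gt0 // mulrCA mulrA.
exact: (zeta_pow_le bounded bound).
Qed.
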